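(* Let $\mathbf{C}$ be a finitary adhesive category with a strict initial object $\varnothing$, in which all final pullback complements (FPCs) along monomorphisms exist and monomorphisms are stable under FPCs. Let $\{p_j=(O_j\xleftarrow{}K_j\xrightarrow{}I_j)\}_{j\in\mathcal{J}}$ be a finite family of linear rules and $\{\kappa_j\}_{j\in\mathcal{J}}$ non-zero parameters $\kappa_j\in\mathbb{R}_{\geq 0}$ (base rates). For an object $M$ put $\mathbb{O}^{sq}_M:=\rho^{sq}_{\mathbf{C}}(\delta(M\xleftarrow{id_M}M\xrightarrow{id_M}M))$, and define $$H:=\hat{H}+\bar{H},\qquad \hat{H}:=\sum_{j\in\mathcal{J}}\kappa_j\,\rho^{sq}_{\mathbf{C}}(\delta(p_j)),\qquad \bar{H}:=-\sum_{j\in\mathcal{J}}\kappa_j\,\mathbb{O}^{sq}_{I_j}.$$ Then: (1) $H$ is the infinitesimal generator (Hamiltonian) of a continuous-time Markov chain; namely, writing $H|X\rangle=\sum_Y h_{X,Y}|Y\rangle$ (a finite sum over isomorphism classes $Y$ of objects), one has $h_{X,X}\leq 0$, $h_{X,Y}\geq 0$ for $Y\not\cong X$, and $\sum_Y h_{X,Y}=0$ for every $X$ (equivalently $\langle|H=0$). (2) For every object $M$, $\mathbb{O}^{sq}_M$ is an observable, i.e. a diagonal operator: $\mathbb{O}^{sq}_M|X\rangle=\omega_M(X)|X\rangle$ with $\omega_M(X)\in\mathbb{R}$ for every object $X$ (in fact $\omega_M(X)$ is the number of monomorphisms $M\to X$). (3) (Jump-closure) For every linear rule $p=(O\xleftarrow{o}K\xrightarrow{i}I)\in\mathrm{Lin}(\mathbf{C})$,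 $$\langle|\,\rho^{sq}_{\mathbf{C}}(\delta(p))=\langle|\,\mathbb{O}^{sq}_I.$$
   Context: A category is adhesive if it has pushouts along monomorphisms, has pullbacks, and pushouts along monomorphisms are van Kampen squares; finitary if every object has finitely many subobjects; a strict initial object is an initial object $\varnothing$ such that every morphism $X\to\varnothing$ is an isomorphism. FPC: given $a:A\to B$, $c:B\to C$, a pair $(d:D\to C,b:A\to D)$ is an FPC of $(c,a)$ if $c\circ a=d\circ b$, the square is a pullback, and for all $x:E\to B$, $y:E\to F$, $z:F\to C$, $w:E\to A$ with $(E,x,y)$ a pullback of $(c,z)$ and $a\circ w=x$, there is a unique $w^*:F\to D$ with $d\circ w^*=z$, $w^*\circ y=b\circ w$. The assumption means: for composable monomorphisms $K\xrightarrow{i}I\xrightarrow{m}X$ an FPC of $(m,i)$ exists and consists of monomorphisms. $\mathrm{Lin}(\mathbf{C})$: isomorphism classes of spans of monomorphisms $p=(O\xleftarrow{o}K\xrightarrow{i}I)$. SqPO derivation: $\mathsf{M}_p(X)$ is the set of monomorphisms $m:I\to X$; for such $m$ let $(i':\overline{K}\to X,k:K\to\overline{K})$ be the FPC of $(m,i)$ and let $p_m(X)$ be the pushout of $O\xleftarrow{o}K\xrightarrow{k}\overline{K}$. $\mathcal{R}_{\mathbf{C}}$ is the free $\mathbb{R}$-vector space with basis $\{\delta(p)\mid p\in\mathrm{Lin}(\mathbf{C})\}$. $\hat{\mathbf{C}}$ is the free $\mathbb{R}$-vector space with basis vectors $|X\rangle$ indexed by isomorphism classes of objects. The canonical representation: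 $\rho^{sq}_{\mathbf{C}}(\delta(p))|X\rangle:=\sum_{m\in\mathsf{M}_p(X)}|p_m(X)\rangle$ ($=0$ if $\mathsf{M}_p(X)=\emptyset$), extended linearly. The projection $\langle|$ is the linear functional with $\langle|X\rangle=1$ for every basis vector $|X\rangle$; $\langle|A=\langle|B$ for operators $A,B$ means $\langle|A|X\rangle=\langle|B|X\rangle$ for all $X$.
   Formalization: The category 𝐂 is also assumed to have only finitely many monomorphisms A → X for all objects A and X, so every set $\mathsf{M}_p(X)$ is finite. The statement above fails without it. *)

From Stdlib Require Import Reals List ClassicalEpsilon.
Set Implicit Arguments.
Open Scope R_scope.

Record Category := {
  Obj :> Type;
  Hom : Obj -> Obj -> Type;
  idm : forall A : Obj, Hom A A;
  comp : forall A B D : Obj, Hom B D -> Hom A B -> Hom A D;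
  comp_idl : forall A B (f : Hom A B), comp (idm B) f = f;
  comp_idr : forall A B (f : Hom A B), comp f (idm A) = f;
  comp_assoc : forall A B D E (h : Hom D E) (g : Hom B D) (f : Hom A B),
      comp h (comp g f) = comp (comp h g) f
}.
Arguments Hom {c} _ _.
Arguments idm {c} _.
Arguments comp {c A B D} _ _.

Section CatDefs.
Context (C : Category).
Local Notation "g ∘ f" := (comp g f) (at level 40, left associativity).

Definition mono {A B : C} (f : Hom A B) : Prop :=
  forall (Z : C) (g h : Hom Z A), f ∘ g = f ∘ h -> g = h.

Definition is_iso {A B : C} (f : Hom A B) : Prop :=
  exists g : Hom B A, g ∘ f = idm A /\ f ∘ g = idm B.

Definition isomorphic (A B : C) : Prop := exists f : Hom A B, is_iso f.

Definition is_pullback {B D E : C} (f : Hom B E) (g : Hom D E)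
    (P : C) (p1 : Hom P B) (p2 : Hom P D) : Prop :=
  f ∘ p1 = g ∘ p2 /\
  forall (Q : C) (q1 : Hom Q B) (q2 : Hom Q D), f ∘ q1 = g ∘ q2 ->
    exists! u : Hom Q P, p1 ∘ u = q1 /\ p2 ∘ u = q2.

Definition is_pushout {A B D : C} (f : Hom A B) (g : Hom A D)
    (P : C) (i1 : Hom B P) (i2 : Hom D P) : Prop :=
  i1 ∘ f = i2 ∘ g /\
  forall (Q : C) (q1 : Hom B Q) (q2 : Hom D Q), q1 ∘ f = q2 ∘ g ->
    exists! u : Hom P Q, u ∘ i1 = q1 /\ u ∘ i2 = q2.

Definition has_pullbacks : Prop :=
  forall (B D E : C) (f : Hom B E) (g : Hom D E),
    exists (P : C) (p1 : Hom P B) (p2 : Hom P D), is_pullback f g P p1 p2.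

Definition has_pushouts_along_monos : Prop :=
  forall (A B D : C) (f : Hom A B) (g : Hom A D), mono f ->
    exists (P : C) (i1 : Hom B P) (i2 : Hom D P), is_pushout f g P i1 i2.

Definition van_Kampen {A B D E : C} (f : Hom A B) (g : Hom A D)
    (h : Hom B E) (k : Hom D E) : Prop :=
  forall (A' B' D' E' : C) (f' : Hom A' B') (g' : Hom A' D')
         (h' : Hom B' E') (k' : Hom D' E')
         (a : Hom A' A) (b : Hom B' B) (d : Hom D' D) (e : Hom E' E),
    h' ∘ f' = k' ∘ g' ->
    f ∘ a = b ∘ f' -> g ∘ a = d ∘ g' -> h ∘ b = e ∘ h' -> k ∘ d = e ∘ k' ->
    is_pullback f b A' a f' -> is_pullback g d A' a g' ->
    (is_pushout f' g' E' h' k' <->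
       (is_pullback h e B' b h' /\ is_pullback k e D' d k')).

Definition adhesive : Prop :=
  has_pullbacks /\ has_pushouts_along_monos /\
  forall (A B D E : C) (f : Hom A B) (g : Hom A D) (h : Hom B E) (k : Hom D E),
    mono f -> is_pushout f g E h k -> van_Kampen f g h k.

Definition same_subobject {A A' X : C} (m : Hom A X) (m' : Hom A' X) : Prop :=
  exists phi : Hom A A', is_iso phi /\ m' ∘ phi = m.

Definition finitary : Prop :=
  forall X : C, exists l : list {A : C & Hom A X},
    (forall s, In s l -> mono (projT2 s)) /\
    forall (A : C) (m : Hom A X), mono m ->
      exists s, In s l /\ same_subobject m (projT2 s).

Definition is_initial (Z : C) : Prop := forall X : C, exists! f : Hom Z X, True.

Definition strict_initial (Z : C) : Prop :=
  is_initial Z /\ forall (X : C) (f : Hom X Z), is_iso f.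

Definition is_FPC {A B E : C} (c : Hom B E) (a : Hom A B)
    {D : C} (d : Hom D E) (b : Hom A D) : Prop :=
  c ∘ a = d ∘ b /\ is_pullback c d A a b /\
  forall (Eo F : C) (x : Hom Eo B) (y : Hom Eo F) (z : Hom F E) (w : Hom Eo A),
    is_pullback c z Eo x y -> a ∘ w = x ->
    exists! ws : Hom F D, d ∘ ws = z /\ ws ∘ y = b ∘ w.

Definition FPC_mono_assumption : Prop :=
  forall (K I X : C) (i : Hom K I) (m : Hom I X), mono i -> mono m ->
    exists (D : C) (d : Hom D X) (b : Hom K D), is_FPC m i d b /\ mono d /\ mono b.

(** Finiteness of the sets of monomorphisms A -> X (presupposed by the
    definition of the canonical representation). *)
Definition mono_hom_finite : Prop :=
  forall A X : C, exists l : list (Hom A X), forall m : Hom A X, mono m -> In m l.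

Lemma idm_mono (A : C) : mono (idm A).
Proof. intros Z g h H. rewrite !comp_idl in H. exact H. Qed.

Record rule := {
  rO : C; rK : C; rI : C;
  ro : Hom rK rO; ri : Hom rK rI;
  ro_mono : mono ro; ri_mono : mono ri
}.

Definition id_rule (M : C) : rule :=
  {| rO := M; rK := M; rI := M; ro := idm M; ri := idm M;
     ro_mono := idm_mono M; ri_mono := idm_mono M |}.

(** Y is (isomorphic to) the SqPO derivation p_m(X): FPC (i', k) of (m, i),
    then pushout of O <-o- K -k-> Kbar. *)
Definition sqpo_result (p : rule) (X : C) (m : Hom (rI p) X) (Y : C) : Prop :=
  exists (Kb : C) (i' : Hom Kb X) (k : Hom (rK p) Kb),
    is_FPC m (ri p) i' k /\
    exists (P : C) (j1 : Hom (rO p) P) (j2 : Hom Kb P),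
      is_pushout (ro p) k P j1 j2 /\ isomorphic P Y.

Definition has_card {T : Type} (P : T -> Prop) (n : nat) : Prop :=
  exists l : list T, NoDup l /\ (forall x, P x <-> In x l) /\ length l = n.

Definition card {T : Type} (P : T -> Prop) : nat :=
  epsilon (inhabits 0%nat) (fun n => has_card P n).

(** A vector is given by its coefficient function
    Y |-> (coefficient of the basis vector |[Y]>); all vectors below are
    isomorphism-invariant in Y.  Operators are given by their action on the
    basis vectors |X>. *)
Definition vec := C -> R.

Definition rho_sq (p : rule) (X : C) : vec :=
  fun Y => INR (card (fun m : Hom (rI p) X => mono m /\ sqpo_result p X m Y)).

Definition obs (M : C) (X : C) : vec := rho_sq (id_rule M) X.

Fixpoint pw_noniso (l : list C) : Prop :=
  match l with
  | nil => True
  | Y :: l' => (forall Y', In Y' l' -> ~ isomorphic Y Y') /\ pw_noniso l'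
  end.

Definition support_in (Ys : list C) (v : vec) : Prop :=
  pw_noniso Ys /\ forall Y : C, v Y <> 0 -> exists Y', In Y' Ys /\ isomorphic Y Y'.

Definition bra_value (v : vec) (s : R) : Prop :=
  exists Ys, support_in Ys v /\ s = fold_right Rplus 0 (map v Ys).

(** The projection < | applied to a vector: sum of all its coefficients. *)
Definition bra (v : vec) : R := epsilon (inhabits 0) (bra_value v).

Definition sumR (n : nat) (f : nat -> R) : R := fold_right Rplus 0 (map f (seq 0 n)).

Definition hamiltonian (n : nat) (p : nat -> rule) (kappa : nat -> R) (X : C) : vec :=
  fun Y => sumR n (fun j => kappa j * rho_sq (p j) X Y)
         - sumR n (fun j => kappa j * obs (rI (p j)) X Y).

End CatDefs.

Arguments mono {C A B} f.
Arguments is_iso {C A B} f.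
Arguments isomorphic {C} A B.
Arguments strict_initial {C} Z.
Arguments support_in {C} Ys v.
Arguments bra {C} v.
Arguments rho_sq {C} p X _.
Arguments obs {C} M X _.
Arguments hamiltonian {C} n p kappa X _.
Arguments rI {C} r.

(* For a mono m : I -> X the SqPO derivation exists (FPC assumption, then a
   pushout along the mono o) and is unique up to isomorphism (FPCs and pushouts
   are unique up to isomorphism).  Hence rho(delta(p))|X> puts exactly one unit
   of mass per mono I -> X on isomorphism classes, so <|rho(delta(p))|X> is the
   number of such monos.  For the identity rule the derivation along m is X
   itself, so O_M is diagonal with that number as eigenvalue, which gives jump
   closure.  Writing H = sum_j kappa_j (rho(delta(p_j)) - O_{I_j}), the
   off-diagonal entries are those of the rho terms, the diagonal entry of each
   term is at most #monos - #monos = 0, and each term has total mass 0. *)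

From Pilot Require Import Defs.
From Stdlib Require Import Reals List Lra Lia ClassicalEpsilon FunctionalExtensionality PropExtensionality Classical.
Open Scope R_scope.

Section SqPODerivation.
Context {C : Category}.
Local Notation "g ⊚ f" := (Defs.comp g f) (at level 40, left associativity).

Lemma isomorphic_refl (A : C) : isomorphic A A.
Proof. exists (idm A), (idm A). rewrite comp_idl. auto. Qed.

Lemma isomorphic_sym (A B : C) : isomorphic A B -> isomorphic B A.
Proof. intros [f [g [Hgf Hfg]]]. exists g, f. auto. Qed.

Lemma isomorphic_trans (A B D : C) : isomorphic A B -> isomorphic B D -> isomorphic A D.
Proof.
  intros [f [g [Hgf Hfg]]] [f' [g' [Hgf' Hfg']]].
  exists (f' ⊚ f), (g ⊚ g'). split.
  - rewrite <- comp_assoc, (comp_assoc _ _ _ _ _ g' f' f), Hgf', comp_idl. exact Hgf.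
  - rewrite <- comp_assoc, (comp_assoc _ _ _ _ _ f g g'), Hfg, comp_idl. exact Hfg'.
Qed.

Lemma is_FPC_endo_id {A B E D : C} (c : Hom B E) (a : Hom A B) (d : Hom D E) (b : Hom A D)
  (u : Hom D D) : is_FPC C c a d b -> d ⊚ u = d -> u ⊚ b = b -> u = idm D.
Proof.
  intros [_ [Hpb Hfinal]] Hdu Hub.
  destruct (Hfinal A D a b d (idm A) Hpb (comp_idr _ _ _ a)) as [w [_ Hw]].
  rewrite comp_idr in Hw.
  transitivity w; [symmetry|]; apply Hw; auto using comp_idl, comp_idr.
Qed.

Lemma is_FPC_unique {A B E D D' : C} (c : Hom B E) (a : Hom A B)
  (d : Hom D E) (b : Hom A D) (d' : Hom D' E) (b' : Hom A D') :
  is_FPC C c a d b -> is_FPC C c a d' b' ->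
  exists psi : Hom D D', is_iso psi /\ psi ⊚ b = b' /\ d' ⊚ psi = d.
Proof.
  intros F F'.
  destruct F as [Ec [Hpb Hfinal]], F' as [Ec' [Hpb' Hfinal']].
  destruct (Hfinal A D' a b' d' (idm A) Hpb' (comp_idr _ _ _ a)) as [u [[Hdu Hub] _]].
  destruct (Hfinal' A D a b d (idm A) Hpb (comp_idr _ _ _ a)) as [v [[Hdv Hvb] _]].
  rewrite comp_idr in Hub, Hvb.
  exists v. split; [|auto]. exists u. split.
  - apply (is_FPC_endo_id c a d b); [split; auto| |].
    + rewrite comp_assoc, Hdu. exact Hdv.
    + rewrite <- comp_assoc, Hvb. exact Hub.
  - apply (is_FPC_endo_id c a d' b'); [split; auto| |].
    + rewrite comp_assoc, Hdv. exact Hdu.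
    + rewrite <- comp_assoc, Hub. exact Hvb.
Qed.

Lemma is_pushout_endo_id {A B D P : C} (f : Hom A B) (g : Hom A D)
  (i1 : Hom B P) (i2 : Hom D P) (u : Hom P P) :
  is_pushout C f g P i1 i2 -> u ⊚ i1 = i1 -> u ⊚ i2 = i2 -> u = idm P.
Proof.
  intros [Hc Hup] Hu1 Hu2.
  destruct (Hup P i1 i2 Hc) as [w [_ Hw]].
  transitivity w; [symmetry|]; apply Hw; auto using comp_idl.
Qed.

Lemma is_pushout_iso_leg {K O Kb Kb' P P' : C} (o : Hom K O) (k : Hom K Kb) (psi : Hom Kb Kb')
  (j1 : Hom O P) (j2 : Hom Kb P) (j1' : Hom O P') (j2' : Hom Kb' P') :
  is_iso psi -> is_pushout C o k P j1 j2 -> is_pushout C o (psi ⊚ k) P' j1' j2' ->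
  isomorphic P P'.
Proof.
  intros [phi [Hphi Hpsi]] PO PO'.
  destruct PO as [Hc Hup], PO' as [Hc' Hup'].
  destruct (Hup P' j1' (j2' ⊚ psi)) as [u [[Hu1 Hu2] _]].
  { rewrite Hc', comp_assoc. reflexivity. }
  destruct (Hup' P j1 (j2 ⊚ phi)) as [v [[Hv1 Hv2] _]].
  { rewrite Hc, <- comp_assoc, (comp_assoc _ _ _ _ _ phi psi k), Hphi, comp_idl. reflexivity. }
  exists u, v. split.
  - apply (is_pushout_endo_id o k j1 j2); [split; auto| |].
    + rewrite <- comp_assoc, Hu1. exact Hv1.
    + rewrite <- comp_assoc, Hu2, comp_assoc, Hv2, <- comp_assoc, Hphi, comp_idr. reflexivity.
  - apply (is_pushout_endo_id o (psi ⊚ k) j1' j2'); [split; auto| |].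
    + rewrite <- comp_assoc, Hv1. exact Hu1.
    + rewrite <- comp_assoc, Hv2, comp_assoc, Hu2, <- comp_assoc, Hpsi, comp_idr. reflexivity.
Qed.

Lemma is_pullback_idm_r {B E : C} (c : Hom B E) : is_pullback C c (idm E) B (idm B) c.
Proof.
  split; [rewrite comp_idr, comp_idl; reflexivity|].
  intros Q q1 q2 Hq. rewrite comp_idl in Hq. exists q1. split.
  - split; [apply comp_idl | exact Hq].
  - intros u [Hu _]. rewrite comp_idl in Hu. symmetry; exact Hu.
Qed.

Lemma is_FPC_idm {B E : C} (c : Hom B E) : is_FPC C c (idm B) (idm E) c.
Proof.
  split; [rewrite comp_idr, comp_idl; reflexivity|].
  split; [apply is_pullback_idm_r|].
  intros Eo F x y z w [Hc _] Hw. rewrite comp_idl in Hw. subst x.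
  exists z. split.
  - split; [apply comp_idl | symmetry; exact Hc].
  - intros u [Hu _]. rewrite comp_idl in Hu. symmetry; exact Hu.
Qed.

Lemma is_pushout_idm_l {A D : C} (g : Hom A D) : is_pushout C (idm A) g D g (idm D).
Proof.
  split; [rewrite comp_idr, comp_idl; reflexivity|].
  intros Q q1 q2 Hq. rewrite comp_idr in Hq. exists q2. split.
  - split; [symmetry; exact Hq | apply comp_idr].
  - intros u [_ Hu]. rewrite comp_idr in Hu. symmetry; exact Hu.
Qed.

Lemma sqpo_result_unique (q : rule C) (X : C) (m : Hom (rI q) X) (Y Y' : C) :
  sqpo_result q X m Y -> sqpo_result q X m Y' -> isomorphic Y Y'.
Proof.
  intros [Kb [i' [k [F [P [j1 [j2 [PO HPY]]]]]]]]
         [Kb' [i'' [k' [F' [P' [j1' [j2' [PO' HPY']]]]]]]].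
  destruct (is_FPC_unique _ _ _ _ _ _ F F') as [psi [Hpsi [Hk _]]].
  subst k'.
  apply isomorphic_trans with P; [apply isomorphic_sym; exact HPY|].
  apply isomorphic_trans with P'; [|exact HPY'].
  exact (is_pushout_iso_leg _ _ _ _ _ _ _ Hpsi PO PO').
Qed.

Lemma sqpo_result_isomorphic (q : rule C) (X : C) (m : Hom (rI q) X) (Y Y' : C) :
  sqpo_result q X m Y -> isomorphic Y Y' -> sqpo_result q X m Y'.
Proof.
  intros [Kb [i' [k [F [P [j1 [j2 [PO HPY]]]]]]]] HYY'.
  exists Kb, i', k. split; [exact F|].
  exists P, j1, j2. split; [exact PO|]. exact (isomorphic_trans _ _ _ HPY HYY').
Qed.

Lemma sqpo_result_exists (Hadh : adhesive C) (Hfpc : FPC_mono_assumption C)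
  (q : rule C) (X : C) (m : Hom (rI q) X) : mono m -> exists Y, sqpo_result q X m Y.
Proof.
  intros Hm.
  destruct (Hfpc _ _ _ (ri q) m (ri_mono q) Hm) as [Kb [i' [k [F _]]]].
  destruct Hadh as [_ [Hpo _]].
  destruct (Hpo _ _ _ (ro q) k (ro_mono q)) as [P [j1 [j2 PO]]].
  exists P, Kb, i', k. split; [exact F|].
  exists P, j1, j2. split; [exact PO | apply isomorphic_refl].
Qed.

Lemma sqpo_result_id_rule (M X : C) (m : Hom M X) : sqpo_result (id_rule C M) X m X.
Proof.
  exists X, (idm X), m. split; [apply is_FPC_idm|].
  exists X, m, (idm X). split; [apply is_pushout_idm_l | apply isomorphic_refl].
Qed.

End SqPODerivation.

Definition holds (P : Prop) : bool := if excluded_middle_informative P then true else false.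

Lemma holds_true (P : Prop) : holds P = true <-> P.
Proof. unfold holds. destruct (excluded_middle_informative P); split; auto; discriminate. Qed.

Lemma holds_false (P : Prop) : negb (holds P) = true <-> ~ P.
Proof. unfold holds. destruct (excluded_middle_informative P); simpl; split; auto; try discriminate; tauto. Qed.

Definition finite_pred {T : Type} (P : T -> Prop) : Prop := exists l : list T, forall x, P x -> In x l.

Section Cardinality.
Context {T : Type}.

Lemma card_ext (P Q : T -> Prop) : (forall x, P x <-> Q x) -> card P = card Q.
Proof.
  intros HPQ. replace Q with P; [reflexivity|].
  apply functional_extensionality. intros x. apply propositional_extensionality, HPQ.
Qed.

Lemma has_card_unique (P : T -> Prop) (n1 n2 : nat) : has_card P n1 -> has_card P n2 -> n1 = n2.
Proof.
  intros [l1 [N1 [H1 L1]]] [l2 [N2 [H2 L2]]]. subst.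
  apply Nat.le_antisymm; apply NoDup_incl_length; auto; intros x Hx.
  - apply H2, H1, Hx.
  - apply H1, H2, Hx.
Qed.

Lemma card_has_card (P : T -> Prop) (n : nat) : has_card P n -> card P = n.
Proof.
  intros Hn. apply (has_card_unique P); [|exact Hn].
  exact (epsilon_spec (inhabits 0%nat) (has_card P) (ex_intro _ n Hn)).
Qed.

Lemma card_empty (P : T -> Prop) : (forall x, ~ P x) -> card P = 0%nat.
Proof.
  intros HP. apply card_has_card. exists nil. split; [constructor|]. split; [|reflexivity].
  intros x. split; [intros Hx; destruct (HP x Hx) | intros []].
Qed.

Lemma card_nonzero (P : T -> Prop) : card P <> 0%nat -> exists x, P x.
Proof.
  intros Hc. apply NNPP. intros Hn. apply Hc, card_empty. intros x Hx. apply Hn. exists x. exact Hx.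
Qed.

Lemma finite_has_card (P : T -> Prop) : finite_pred P -> has_card P (card P).
Proof.
  intros [l Hl].
  set (l' := filter (fun x => holds (P x)) (nodup (fun x y => excluded_middle_informative (x = y)) l)).
  assert (Hl' : has_card P (length l')).
  { exists l'. split; [apply NoDup_filter, NoDup_nodup|]. split; [|reflexivity].
    intros x. unfold l'. rewrite filter_In, nodup_In, holds_true. split; [auto | tauto]. }
  rewrite (card_has_card _ _ Hl'). exact Hl'.
Qed.

Lemma card_split (P Q : T -> Prop) : finite_pred P ->
  card P = (card (fun x => P x /\ Q x) + card (fun x => P x /\ ~ Q x))%nat.
Proof.
  intros Hf. destruct (finite_has_card P Hf) as [l [Hnd [Hl Hlen]]].
  rewrite <- Hlen, <- (filter_length (fun x => holds (Q x)) l).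
  f_equal; symmetry; apply card_has_card.
  - exists (filter (fun x => holds (Q x)) l). split; [apply NoDup_filter, Hnd|]. split; [|reflexivity].
    intros x. rewrite filter_In, holds_true, Hl. tauto.
  - exists (filter (fun x => negb (holds (Q x))) l). split; [apply NoDup_filter, Hnd|]. split; [|reflexivity].
    intros x. rewrite filter_In, holds_false, Hl. tauto.
Qed.

Lemma card_le (P Q : T -> Prop) : finite_pred P -> (forall x, Q x -> P x) -> (card Q <= card P)%nat.
Proof.
  intros Hf HQP. rewrite (card_split P Q Hf), (card_ext (fun x => P x /\ Q x) Q); [lia|].
  intros x. split; [tauto | auto].
Qed.

End Cardinality.

Lemma list_choice {A B : Type} (Q : A -> Prop) (Rel : A -> B -> Prop) (l : list A) :
  (forall a, Q a -> exists b, Rel a b) ->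
  exists lb, forall a, In a l -> Q a -> exists b, In b lb /\ Rel a b.
Proof.
  intros Hex. induction l as [|a l [lb Hlb]].
  - exists nil. intros a [].
  - destruct (classic (Q a)) as [Ha|Ha].
    + destruct (Hex a Ha) as [b Hb]. exists (b :: lb). intros a' [<-|Ha'] HQ.
      * exists b. split; [left|]; auto.
      * destruct (Hlb a' Ha' HQ) as [b' [Hin Hb']]. exists b'. split; [right|]; auto.
    + exists lb. intros a' [<-|Ha'] HQ; [contradiction | auto].
Qed.

Definition rsum {A : Type} (l : list A) (f : A -> R) : R := fold_right Rplus 0 (map f l).

Section ListSums.
Context {A : Type}.

Lemma rsum_cons (a : A) (l : list A) (f : A -> R) : rsum (a :: l) f = f a + rsum l f.
Proof. reflexivity. Qed.

Lemma rsum_ext_in (l : list A) (f g : A -> R) : (forall x, In x l -> f x = g x) -> rsum l f = rsum l g.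
Proof. intros Hfg. unfold rsum. f_equal. apply map_ext_in, Hfg. Qed.

Lemma rsum_eq0 (l : list A) (f : A -> R) : (forall x, In x l -> f x = 0) -> rsum l f = 0.
Proof.
  induction l as [|a l IH]; intros Hf; [reflexivity|].
  rewrite rsum_cons, Hf, IH; [ring | intros x Hx; apply Hf; right; exact Hx | left; reflexivity].
Qed.

Lemma rsum_le (l : list A) (f g : A -> R) : (forall x, In x l -> f x <= g x) -> rsum l f <= rsum l g.
Proof.
  induction l as [|a l IH]; intros Hfg; [apply Rle_refl|].
  rewrite !rsum_cons. apply Rplus_le_compat; [|apply IH]; intros; apply Hfg; simpl; auto.
Qed.

Lemma rsum_nonzero (l : list A) (f : A -> R) : rsum l f <> 0 -> exists x, In x l /\ f x <> 0.
Proof.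
  intros Hf. apply NNPP. intros Hn. apply Hf, rsum_eq0. intros x Hx. apply NNPP. intros Hx'.
  apply Hn. exists x. auto.
Qed.

Lemma rsum_plus (l : list A) (f g : A -> R) :
  rsum l (fun x => f x + g x) = rsum l f + rsum l g.
Proof. induction l as [|a l IH]; [unfold rsum; simpl; ring|]. rewrite !rsum_cons, IH. ring. Qed.

Lemma rsum_minus (l : list A) (f g : A -> R) :
  rsum l (fun x => f x - g x) = rsum l f - rsum l g.
Proof. induction l as [|a l IH]; [unfold rsum; simpl; ring|]. rewrite !rsum_cons, IH. ring. Qed.

Lemma rsum_scal (l : list A) (c : R) (f : A -> R) : rsum l (fun x => c * f x) = c * rsum l f.
Proof. induction l as [|a l IH]; [unfold rsum; simpl; ring|]. rewrite !rsum_cons, IH. ring. Qed.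

End ListSums.

Lemma rsum_comm {A B : Type} (l : list A) (l' : list B) (f : A -> B -> R) :
  rsum l (fun x => rsum l' (f x)) = rsum l' (fun y => rsum l (fun x => f x y)).
Proof.
  induction l as [|a l IH].
  - transitivity 0; [reflexivity | symmetry; apply rsum_eq0; reflexivity].
  - rewrite rsum_cons, IH, <- rsum_plus. reflexivity.
Qed.

Section Vectors.
Context {C : Category}.

Definition vec_invariant (v : vec C) : Prop := forall Y Y' : C, isomorphic Y Y' -> v Y = v Y'.

Definition covers (Ys : list C) (v : vec C) : Prop :=
  forall Y : C, v Y <> 0 -> exists Y', In Y' Ys /\ isomorphic Y Y'.

Definition iso_ind (Y Y' : C) : R := if excluded_middle_informative (isomorphic Y Y') then 1 else 0.

Lemma rsum_iso_ind (Ys : list C) (Y : C) : pw_noniso C Ys ->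
  (exists Y', In Y' Ys /\ isomorphic Y Y') -> rsum Ys (iso_ind Y) = 1.
Proof.
  induction Ys as [|Z Ys IH]; intros Hnd [Y' [HY' HYY']]; [destruct HY'|].
  destruct Hnd as [HZ HYs]. rewrite rsum_cons. unfold iso_ind at 1.
  destruct (excluded_middle_informative (isomorphic Y Z)) as [HYZ|HYZ].
  - rewrite rsum_eq0; [ring|]. intros Z' HZ'. unfold iso_ind.
    destruct (excluded_middle_informative (isomorphic Y Z')) as [HYZ'|]; [|reflexivity].
    destruct (HZ Z' HZ'). exact (isomorphic_trans _ _ _ (isomorphic_sym _ _ HYZ) HYZ').
  - destruct HY' as [<-|HY']; [contradiction|].
    rewrite IH; [ring | exact HYs | exists Y'; auto].
Qed.

(** Each nonzero coefficient [v Y] is counted once, at the unique representative of [Y] in [Ys']. *)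
Lemma rsum_expand_classes (v : vec C) (Ys Ys' : list C) : pw_noniso C Ys' -> covers Ys' v ->
  rsum Ys v = rsum Ys (fun Y => rsum Ys' (fun Y' => v Y * iso_ind Y Y')).
Proof.
  intros Hnd Hcov. apply rsum_ext_in. intros Y _. rewrite rsum_scal.
  destruct (Req_dec (v Y) 0) as [H0|H0]; [rewrite H0; ring|].
  rewrite rsum_iso_ind; [ring | exact Hnd | exact (Hcov Y H0)].
Qed.

Lemma rsum_support_indep (v : vec C) (Ys Ys' : list C) : vec_invariant v ->
  support_in Ys v -> support_in Ys' v -> rsum Ys v = rsum Ys' v.
Proof.
  intros Hv [Hnd Hcov] [Hnd' Hcov'].
  rewrite (rsum_expand_classes v Ys Ys' Hnd' Hcov'), (rsum_expand_classes v Ys' Ys Hnd Hcov), rsum_comm.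
  apply rsum_ext_in. intros Y' _. apply rsum_ext_in. intros Y _. unfold iso_ind.
  destruct (excluded_middle_informative (isomorphic Y Y')) as [H|H];
  destruct (excluded_middle_informative (isomorphic Y' Y)) as [H'|H'].
  - rewrite (Hv Y Y' H). reflexivity.
  - destruct (H' (isomorphic_sym _ _ H)).
  - destruct (H (isomorphic_sym _ _ H')).
  - ring.
Qed.

Lemma bra_support (v : vec C) (Ys : list C) : vec_invariant v -> support_in Ys v -> bra v = rsum Ys v.
Proof.
  intros Hv HYs. unfold bra.
  destruct (epsilon_spec (inhabits 0) (bra_value v) (ex_intro _ (rsum Ys v) (ex_intro _ Ys (conj HYs eq_refl))))
    as [Ys' [HYs' ->]].
  exact (rsum_support_indep v Ys' Ys Hv HYs' HYs).
Qed.

Lemma pw_noniso_representatives (l : list C) : exists Ys, pw_noniso C Ys /\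
  forall Y, In Y l -> exists Y', In Y' Ys /\ isomorphic Y Y'.
Proof.
  induction l as [|Z l [Ys [Hnd HYs]]].
  - exists nil. split; [exact I | intros Y []].
  - destruct (classic (exists Y', In Y' Ys /\ isomorphic Z Y')) as [HZ|HZ].
    + exists Ys. split; [exact Hnd|]. intros Y [->|HY]; auto.
    + exists (Z :: Ys). split.
      * split; [|exact Hnd]. intros Y' HY' HZY'. apply HZ. exists Y'. auto.
      * intros Y [->|HY].
        -- exists Y. split; [left; reflexivity | apply isomorphic_refl].
        -- destruct (HYs Y HY) as [Y' [HY' HYY']]. exists Y'. split; [right|]; auto.
Qed.

Lemma covers_refine (v : vec C) (l l' : list C) : covers l v ->
  (forall Y, In Y l -> exists Y', In Y' l' /\ isomorphic Y Y') -> covers l' v.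
Proof.
  intros Hcov Hll' Y HY. destruct (Hcov Y HY) as [Z [HZ HYZ]].
  destruct (Hll' Z HZ) as [Y' [HY' HZY']]. exists Y'. split; [exact HY'|].
  exact (isomorphic_trans _ _ _ HYZ HZY').
Qed.

Lemma covers_rsum {A : Type} (J : list A) (f : A -> vec C) (l : list C) :
  (forall j, In j J -> covers l (f j)) -> covers l (fun Y => rsum J (fun j => f j Y)).
Proof.
  intros Hf Y HY. destruct (rsum_nonzero J _ HY) as [j [Hj Hfj]]. exact (Hf j Hj Y Hfj).
Qed.

Lemma covers_scal_minus (c : R) (v w : vec C) (l : list C) :
  covers l v -> covers l w -> covers l (fun Y => c * (v Y - w Y)).
Proof.
  intros Hv Hw Y HY. destruct (Req_dec (v Y) 0) as [H0|H0]; [|exact (Hv Y H0)].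
  apply Hw. intros H0'. apply HY. rewrite H0, H0'. ring.
Qed.

Lemma rsum_card_fibres {T : Type} (Rel : T -> C -> Prop) (Q : T -> Prop) (Ys : list C) :
  pw_noniso C Ys -> (forall m Y Y', Rel m Y -> Rel m Y' -> isomorphic Y Y') -> finite_pred Q ->
  (forall m, Q m -> exists Y, In Y Ys /\ Rel m Y) ->
  rsum Ys (fun Y => INR (card (fun m => Q m /\ Rel m Y))) = INR (card Q).
Proof.
  intros Hnd Hfun. revert Q. induction Ys as [|Y Ys IH]; intros Q Hfin HQ.
  - rewrite card_empty; [reflexivity|]. intros m Hm. destruct (HQ m Hm) as [? [[] _]].
  - destruct Hnd as [HY Hnd]. rewrite rsum_cons, (card_split Q (fun m => Rel m Y) Hfin), plus_INR.
    rewrite <- (IH Hnd (fun m => Q m /\ ~ Rel m Y)).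
    + f_equal. apply rsum_ext_in. intros Z HZ. f_equal. apply card_ext. intros m. split; [|tauto].
      intros [Hm HmZ]. repeat split; auto. intros HmY. exact (HY Z HZ (Hfun m Y Z HmY HmZ)).
    + destruct Hfin as [l Hl]. exists l. intros m [Hm _]. auto.
    + intros m [Hm HmY]. destruct (HQ m Hm) as [Y' [[<-|HY'] HmY']]; [contradiction|eauto].
Qed.

End Vectors.

Section CanonicalRepresentation.
Context {C : Category}.
Hypotheses (Hadh : adhesive C) (Hfpc : FPC_mono_assumption C) (Hmf : mono_hom_finite C).

Lemma rho_sq_invariant (q : rule C) (X : C) : vec_invariant (rho_sq q X).
Proof.
  intros Y Y' HYY'. unfold rho_sq. f_equal. apply card_ext. intros m.
  split; intros [Hm Hres]; split; auto; eapply sqpo_result_isomorphic; eauto using isomorphic_sym.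
Qed.

Lemma obs_self (M X : C) : obs M X X = INR (card (fun f : Hom M X => mono f)).
Proof.
  unfold obs, rho_sq. f_equal. apply card_ext. intros m.
  split; [tauto | intros Hm; split; [exact Hm | apply sqpo_result_id_rule]].
Qed.

Lemma obs_off_diag (M X Y : C) : ~ isomorphic X Y -> obs M X Y = 0.
Proof.
  intros HXY. unfold obs, rho_sq. rewrite card_empty; [reflexivity|].
  intros m [_ Hres]. exact (HXY (sqpo_result_unique _ _ _ _ _ (sqpo_result_id_rule M X m) Hres)).
Qed.

Lemma covers_obs (M X : C) : covers (X :: nil) (obs M X).
Proof.
  intros Y HY. exists X. split; [left; reflexivity|].
  apply isomorphic_sym, NNPP. intros HXY. exact (HY (obs_off_diag M X Y HXY)).
Qed.

Lemma rho_sq_le_card (q : rule C) (X Y : C) :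
  rho_sq q X Y <= INR (card (fun m : Hom (rI q) X => mono m)).
Proof.
  apply le_INR, card_le; [|tauto].
  destruct (Hmf (rI q) X) as [l Hl]. exists l. exact Hl.
Qed.

Lemma rho_sq_support (q : rule C) (X : C) :
  exists Ys, support_in Ys (rho_sq q X) /\
    rsum Ys (rho_sq q X) = INR (card (fun m : Hom (rI q) X => mono m)).
Proof.
  destruct (Hmf (rI q) X) as [l Hl].
  destruct (list_choice mono (sqpo_result q X) l (sqpo_result_exists Hadh Hfpc q X)) as [lo Hlo].
  destruct (pw_noniso_representatives lo) as [Ys [Hnd Hrep]].
  assert (Hres : forall m : Hom (rI q) X, mono m -> exists Y, In Y Ys /\ sqpo_result q X m Y).
  { intros m Hm. destruct (Hlo m (Hl m Hm) Hm) as [Y [HY Hres]].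
    destruct (Hrep Y HY) as [Y' [HY' HYY']].
    exists Y'. split; [exact HY' | exact (sqpo_result_isomorphic _ _ _ _ _ Hres HYY')]. }
  exists Ys. split; [split; [exact Hnd|] |].
  - intros Y HY. destruct (card_nonzero _ (fun H0 => HY (f_equal INR H0))) as [m [Hm HmY]].
    destruct (Hres m Hm) as [Y' [HY' HmY']]. exists Y'.
    split; [exact HY' | exact (sqpo_result_unique _ _ _ _ _ HmY HmY')].
  - apply (rsum_card_fibres (sqpo_result q X)); auto.
    + intros m. apply sqpo_result_unique.
    + exists l. exact Hl.
Qed.

Lemma bra_rho_sq (q : rule C) (X : C) :
  bra (rho_sq q X) = INR (card (fun m : Hom (rI q) X => mono m)).
Proof.
  destruct (rho_sq_support q X) as [Ys [HYs Hsum]].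
  rewrite (bra_support _ Ys (rho_sq_invariant q X) HYs). exact Hsum.
Qed.

Lemma jump_closure (q : rule C) (X : C) : bra (rho_sq q X) = bra (obs (rI q) X).
Proof. unfold obs. rewrite !bra_rho_sq. reflexivity. Qed.

End CanonicalRepresentation.

Section Hamiltonian.
Context {C : Category}.
Hypotheses (Hadh : adhesive C) (Hfpc : FPC_mono_assumption C) (Hmf : mono_hom_finite C).
Variables (n : nat) (p : nat -> rule C) (kappa : nat -> R).

Lemma hamiltonian_termwise (X Y : C) : hamiltonian n p kappa X Y =
  rsum (seq 0 n) (fun j => kappa j * (rho_sq (p j) X Y - obs (rI (p j)) X Y)).
Proof.
  rewrite (rsum_ext_in _ _ (fun j => kappa j * rho_sq (p j) X Y - kappa j * obs (rI (p j)) X Y));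
    [rewrite rsum_minus; reflexivity | intros j _; ring].
Qed.

Lemma hamiltonian_invariant (X : C) : vec_invariant (hamiltonian n p kappa X).
Proof.
  intros Y Y' HYY'. rewrite !hamiltonian_termwise. apply rsum_ext_in. intros j _. cbv beta.
  unfold obs. rewrite !(rho_sq_invariant _ _ _ _ HYY'). reflexivity.
Qed.

Lemma hamiltonian_common_support (X : C) : exists Ys, pw_noniso C Ys /\
  covers Ys (hamiltonian n p kappa X) /\
  forall j, (j < n)%nat -> covers Ys (rho_sq (p j) X) /\ covers Ys (obs (rI (p j)) X).
Proof.
  assert (Hl : exists l, In X l /\ forall j, (j < n)%nat -> covers l (rho_sq (p j) X)).
  { induction n as [|k [l [HX Hl]]].
    - exists (X :: nil). split; [left; reflexivity | intros j Hj; lia].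
    - destruct (rho_sq_support Hadh Hfpc Hmf (p k) X) as [Ys [[_ HYs] _]].
      exists (Ys ++ l). split; [apply in_or_app; right; exact HX|].
      intros j Hj. destruct (Nat.eq_dec j k) as [->|Hjk].
      + apply (covers_refine _ Ys); [exact HYs|]. intros Y HY. exists Y.
        split; [apply in_or_app; left; exact HY | apply isomorphic_refl].
      + apply (covers_refine _ l); [apply Hl; lia|]. intros Y HY. exists Y.
        split; [apply in_or_app; right; exact HY | apply isomorphic_refl]. }
  destruct Hl as [l [HX Hl]].
  destruct (pw_noniso_representatives l) as [Ys [Hnd Hrep]].
  assert (Hterms : forall j, (j < n)%nat ->
            covers Ys (rho_sq (p j) X) /\ covers Ys (obs (rI (p j)) X)).
  { intros j Hj. split; [exact (covers_refine _ _ _ (Hl j Hj) Hrep)|].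
    apply (covers_refine _ _ _ (covers_obs _ X)). intros Y [<-|[]]. exact (Hrep X HX). }
  exists Ys. split; [exact Hnd|]. split; [|exact Hterms].
  intros Y HY. rewrite hamiltonian_termwise in HY. revert Y HY.
  apply covers_rsum. intros j Hj. apply in_seq in Hj.
  destruct (Hterms j ltac:(lia)) as [Hrho Hobs]. exact (covers_scal_minus _ _ _ _ Hrho Hobs).
Qed.

Lemma bra_hamiltonian (X : C) : bra (hamiltonian n p kappa X) = 0.
Proof.
  destruct (hamiltonian_common_support X) as [Ys [Hnd [Hham Hterms]]].
  rewrite (bra_support _ Ys (hamiltonian_invariant X) (conj Hnd Hham)).
  rewrite (rsum_ext_in _ _ _ (fun Y _ => hamiltonian_termwise X Y)), rsum_comm.
  apply rsum_eq0. intros j Hj. apply in_seq in Hj. destruct (Hterms j ltac:(lia)) as [Hrho Hobs].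
  rewrite rsum_scal, rsum_minus,
    <- (bra_support (rho_sq (p j) X) Ys (rho_sq_invariant _ _) (conj Hnd Hrho)),
    <- (bra_support (obs (rI (p j)) X) Ys (rho_sq_invariant _ _) (conj Hnd Hobs)),
    jump_closure by assumption.
  ring.
Qed.

Hypothesis Hk : forall j, (j < n)%nat -> 0 < kappa j.

Lemma hamiltonian_diag_nonpos (X : C) : hamiltonian n p kappa X X <= 0.
Proof.
  rewrite hamiltonian_termwise, <- (rsum_eq0 (seq 0 n) (fun _ => 0)) by reflexivity.
  apply rsum_le. intros j Hj. apply in_seq in Hj.
  rewrite obs_self. pose proof (rho_sq_le_card Hmf (p j) X X). pose proof (Hk j ltac:(lia)).
  nra.
Qed.

Lemma hamiltonian_off_diag_nonneg (X Y : C) : ~ isomorphic X Y -> 0 <= hamiltonian n p kappa X Y.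
Proof.
  intros HXY. rewrite hamiltonian_termwise, <- (rsum_eq0 (seq 0 n) (fun _ => 0)) by reflexivity.
  apply rsum_le. intros j Hj. apply in_seq in Hj.
  rewrite obs_off_diag by exact HXY. pose proof (pos_INR (card (fun m => mono m /\ sqpo_result (p j) X m Y))).
  pose proof (Hk j ltac:(lia)). unfold rho_sq. nra.
Qed.

End Hamiltonian.

Theorem mainTheorem5 (C : Category)
  (Hadh : adhesive C) (Hfin : finitary C)
  (Hinit : exists Z : C, strict_initial Z)
  (Hfpc : FPC_mono_assumption C)
  (Hmf : mono_hom_finite C)
  (n : nat) (p : nat -> rule C) (kappa : nat -> R)
  (Hk : forall j, (j < n)%nat -> 0 < kappa j) :
  (forall X : C,
     hamiltonian n p kappa X X <= 0 /\
     (forall Y : C, ~ isomorphic X Y -> 0 <= hamiltonian n p kappa X Y) /\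
     (exists Ys, support_in Ys (hamiltonian n p kappa X)) /\
     bra (hamiltonian n p kappa X) = 0) /\
  (forall M X : C,
     obs M X X = INR (card (fun f : Hom M X => mono f)) /\
     (forall Y : C, ~ isomorphic X Y -> obs M X Y = 0)) /\
  (forall (q : rule C) (X : C), bra (rho_sq q X) = bra (obs (rI q) X)).
Proof.
  split; [|split].
  - intros X. split; [|split; [|split]].
    + exact (hamiltonian_diag_nonpos Hmf n p kappa Hk X).
    + exact (hamiltonian_off_diag_nonneg n p kappa Hk X).
    + destruct (hamiltonian_common_support Hadh Hfpc Hmf n p kappa X) as [Ys [Hnd [Hcov _]]].
      exists Ys. split; assumption.
    + exact (bra_hamiltonian Hadh Hfpc Hmf n p kappa X).
  - intros M X. split; [apply obs_self | apply obs_off_diag].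
  - exact (jump_closure Hadh Hfpc Hmf).
Qed.
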